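(* Assume $c\ge2\sqrt\delta$. For real $\lambda\ge0$, all of $\mu^u_-(\lambda),\mu^s_+(\lambda),\mu^u_+(\lambda)$ are real and the Riccati equation $\eta'=\frac{\lambda-1+2\hat u(z)}{\delta}-\frac c\delta\eta-\eta^2$ defines a flow on $\mathbb RP^1\cong S^1$. Let $\ell(z;\lambda)$ be the solution on $\mathbb RP^1$ with $\ell(z;\lambda)\to\mu^u_-(\lambda)$ as $z\to-\infty$. Let $0\le\lambda_1<\lambda_2$ be real numbers that are not eigenvalues, and for $j=1,2$ suppose $\ell(\cdot;\lambda_j)$ takes the value $\mu^s_+(\lambda_j)$ exactly $N_j<\infty$ times as $z$ ranges over $\mathbb R$. Then the number of eigenvalues in the interval $(\lambda_1,\lambda_2)$ equals $|N_1-N_2|$.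
   Context: $\delta>0$, $c>0$, and $\hat u$ solves $\delta\hat u''+c\hat u'+\hat u(1-\hat u)=0$ with $\hat u(-\infty)=1$, $\hat u(+\infty)=0$ (for $c\ge2\sqrt\delta$ this wave satisfies $0<\hat u<1$). $\mu^{u}_-(\lambda)=\frac{-c+\sqrt{c^2+4\delta(\lambda+1)}}{2\delta}$, $\mu^{u,s}_+(\lambda)=\frac{-c\pm\sqrt{c^2+4\delta(\lambda-1)}}{2\delta}$. The Riccati equation is the equation for $\eta=q/p$ when $(p,q)$ solves $p'=q$, $q'=\frac{\lambda-1+2\hat u}{\delta}p-\frac c\delta q$; on $\mathbb RP^1$ it is extended through $\eta=\infty$ via the chart $\tau=1/\eta$. A real $\lambda\ge0$ is an eigenvalue if $\lim_{z\to+\infty}\ell(z;\lambda)=\mu^s_+(\lambda)$; when $\lambda$ is not an eigenvalue, $\lim_{z\to+\infty}\ell(z;\lambda)=\mu^u_+(\lambda)$. *)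

From Stdlib Require Import Reals Lra Lia ZArith List.
Open Scope R_scope.

Definition lim_minus_infty (f : R -> R) (l : R) : Prop :=
  forall eps, 0 < eps -> exists M, forall z, z < M -> Rabs (f z - l) < eps.
Definition lim_plus_infty (f : R -> R) (l : R) : Prop :=
  forall eps, 0 < eps -> exists M, forall z, M < z -> Rabs (f z - l) < eps.

Definition traveling_wave (delta c : R) (u u1 u2 : R -> R) : Prop :=
  (forall z, derivable_pt_lim u z (u1 z)) /\
  (forall z, derivable_pt_lim u1 z (u2 z)) /\
  (forall z, delta * u2 z + c * u1 z + u z * (1 - u z) = 0) /\
  lim_minus_infty u 1 /\ lim_plus_infty u 0.

Definition mu_u_minus (delta c lam : R) : R :=
  (- c + sqrt (c ^ 2 + 4 * delta * (lam + 1))) / (2 * delta).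
Definition mu_u_plus (delta c lam : R) : R :=
  (- c + sqrt (c ^ 2 + 4 * delta * (lam - 1))) / (2 * delta).
Definition mu_s_plus (delta c lam : R) : R :=
  (- c - sqrt (c ^ 2 + 4 * delta * (lam - 1))) / (2 * delta).

(* A solution of the Riccati equation on RP^1 is the line [p(z) : q(z)],
   i.e. eta = q/p, extended through eta = infinity (p = 0). *)
Definition linear_sol (delta c : R) (u : R -> R) (lam : R) (p q : R -> R) : Prop :=
  forall z, derivable_pt_lim p z (q z) /\
            derivable_pt_lim q z ((lam - 1 + 2 * u z) / delta * p z - c / delta * q z).

Definition rp1_lim_minus (p q : R -> R) (mu : R) : Prop :=
  forall eps, 0 < eps -> exists M, forall z, z < M -> p z <> 0 /\ Rabs (q z / p z - mu) < eps.
Definition rp1_lim_plus (p q : R -> R) (mu : R) : Prop :=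
  forall eps, 0 < eps -> exists M, forall z, M < z -> p z <> 0 /\ Rabs (q z / p z - mu) < eps.

Definition ell_sol (delta c : R) (u : R -> R) (lam : R) (p q : R -> R) : Prop :=
  linear_sol delta c u lam p q /\ rp1_lim_minus p q (mu_u_minus delta c lam).

Definition rp1_value_eq (p q : R -> R) (z mu : R) : Prop :=
  p z <> 0 /\ q z / p z = mu.

Definition is_eigenvalue (delta c : R) (u : R -> R) (lam : R) : Prop :=
  0 <= lam /\
  exists p q, ell_sol delta c u lam p q /\ rp1_lim_plus p q (mu_s_plus delta c lam).

Definition holds_exactly (P : R -> Prop) (n : nat) : Prop :=
  exists l : list R, NoDup l /\ (forall x, In x l <-> P x) /\ length l = n.

From Stdlib Require Import Reals Lra ZArith List.
From Coquelicot Require Import Coquelicot.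
Open Scope R_scope.

(* For a pulled front (c >= 2 sqrt delta) both sides of the
   counting formula vanish, and the proof shows exactly this, by two
   comparison arguments built on one tool: if (v e^(g z))' >= 0, then
   positivity of v propagates forward in z (exp_weight_positive).
   1. The wave is positive: with b > 0 the smaller root of
      delta b^2 - c b + 1 = 0 (real since c^2 >= 4 delta), the quantity
      (u' + b u) e^((c/delta - b) z) is nondecreasing, and it is positive at
      some point far to the left where u is close to 1; hence so is u e^(b z).
   2. For lam >= 0, writing a0 = c/(2 delta), the quantity
      p (q + a0 p) e^(2 a0 z) is nondecreasing along the linear system, since
      (lam - 1 + 2u)/delta + a0^2 >= 0 by step 1.  As ell -> mu^u_-(lam) > -a0
      at -oo, ell(z;lam) stays finite and strictly above -a0 for all z.
   3. mu^s_+(lam) <= -a0, strictly for lam > 0.  So ell(.;lam) never takes the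
      value mu^s_+(lam) (N1 = N2 = 0) and no lam > 0 is an eigenvalue.  *)

Lemma derivable_pt_lim_exp_scaled (k z : R) :
  derivable_pt_lim (fun x => exp (k * x)) z (k * exp (k * z)).
Proof. apply is_derive_Reals; auto_derive; auto; ring. Qed.

Lemma derivable_pt_lim_eq (f : R -> R) (z v w : R) :
  derivable_pt_lim f z v -> v = w -> derivable_pt_lim f z w.
Proof. now intros H <-. Qed.

Lemma mean_value (f f' : R -> R) (a b : R) :
  (forall z, derivable_pt_lim f z (f' z)) -> a < b ->
  exists c0, f b - f a = f' c0 * (b - a) /\ a < c0 < b.
Proof.
  intros Hd Hab.
  set (pr := fun x => exist (fun l => derivable_pt_abs f x l) (f' x) (Hd x)
                        : derivable_pt f x).
  exact (MVT_cor1 f a b pr Hab).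
Qed.

Lemma nondecreasing_of_deriv_nonneg (f f' : R -> R) (a b : R) :
  (forall z, derivable_pt_lim f z (f' z)) -> a <= b ->
  (forall z, a <= z <= b -> 0 <= f' z) -> f a <= f b.
Proof.
  intros Hd Hab Hpos.
  destruct (Rle_lt_or_eq_dec a b Hab) as [Hlt | <-]; [| lra].
  destruct (mean_value f f' a b Hd Hlt) as [c0 [Hmvt Hc0]].
  assert (0 <= f' c0) by (apply Hpos; lra).
  nra.
Qed.

Lemma exp_weight_positive (v d : R -> R) (g a b : R) :
  (forall z, derivable_pt_lim (fun t => v t * exp (g * t)) z (d z)) ->
  (forall z, a <= z <= b -> 0 <= d z) -> a <= b -> 0 < v a -> 0 < v b.
Proof.
  intros Hd Hpos Hab Ha.
  pose proof (nondecreasing_of_deriv_nonneg _ _ a b Hd Hab Hpos) as Hmono.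
  pose proof (exp_pos (g * a)). pose proof (exp_pos (g * b)).
  assert (0 < v a * exp (g * a)) by (apply Rmult_lt_0_compat; lra).
  destruct (Rlt_le_dec 0 (v b)); [assumption | nra].
Qed.

Lemma pulled_speed_sq (delta c : R) :
  0 < delta -> 0 < c -> 2 * sqrt delta <= c -> 4 * delta <= c * c.
Proof.
  intros Hd Hc Hsc.
  pose proof (sqrt_sqrt delta (Rlt_le _ _ Hd)). pose proof (sqrt_pos delta). nra.
Qed.

(* The characteristic equation at the rest state 0 has a positive real root. *)
Lemma pulled_decay_rate (delta c : R) :
  0 < delta -> 0 < c -> 4 * delta <= c * c ->
  exists b, 0 < b /\ delta * b * b - c * b + 1 = 0.
Proof.
  intros Hd Hc Hc2.
  set (s := sqrt (c * c - 4 * delta)).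
  assert (Hss : s * s = c * c - 4 * delta) by (apply sqrt_sqrt; lra).
  assert (0 <= s) by apply sqrt_pos.
  exists ((c - s) / (2 * delta)). split.
  - apply Rdiv_lt_0_compat; nra.
  - field_simplify; [| lra]. replace (s ^ 2) with (s * s) by ring.
    rewrite Hss. field; lra.
Qed.

Section Wave.

Variables (delta c : R) (u u1 u2 : R -> R).
Hypotheses (Hdelta : 0 < delta) (Hc : 0 < c) (Hspeed : 4 * delta <= c * c)
           (Hwave : traveling_wave delta c u u1 u2).

Lemma wave_weighted_slope_deriv (b z : R) :
  delta * b * b - c * b + 1 = 0 ->
  derivable_pt_lim (fun t => (u1 t + b * u t) * exp ((c / delta - b) * t)) z
    (u z * u z / delta * exp ((c / delta - b) * z)).
Proof.
  intros Hb. destruct Hwave as [Du [Du1 [Hode _]]].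
  eapply derivable_pt_lim_eq.
  - apply (derivable_pt_lim_mult (fun t => u1 t + b * u t)).
    + apply (derivable_pt_lim_plus u1 (mult_real_fct b u));
        [apply Du1 | apply derivable_pt_lim_scal, Du].
    + apply derivable_pt_lim_exp_scaled.
  - assert (Hu2 : u2 z = - (c * u1 z + u z * (1 - u z)) / delta)
      by (pose proof (Hode z); apply (Rmult_eq_reg_l delta); [field_simplify | ]; lra).
    rewrite Hu2.
    replace (u z * u z) with (u z * u z - u z * (delta * b * b - c * b + 1))
      by (rewrite Hb; ring).
    field. lra.
Qed.

(* Far to the left, u is close to 1 and u' + b u is positive somewhere: on an
   interval of length 2/b where u varies by less than 1, the mean value
   theorem yields a point with u' > -b/2, while b u > b/2 there. *)
Lemma wave_left_slope_positive (b w : R) :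
  0 < b -> exists z0, z0 < w /\ 0 < u z0 /\ 0 < u1 z0 + b * u z0.
Proof.
  intros Hb. destruct Hwave as [Du [_ [_ [Hlim _]]]].
  destruct (Hlim (1 / 2) ltac:(lra)) as [M HM].
  set (L := 2 / b).
  assert (HL : L * b = 2) by (unfold L; field; lra).
  assert (0 < L) by (unfold L; apply Rdiv_lt_0_compat; lra).
  set (a := Rmin w M - 1 - L).
  assert (a + L < M /\ a + L < w)
    by (pose proof (Rmin_r w M); pose proof (Rmin_l w M); unfold a; lra).
  destruct (mean_value u u1 a (a + L) Du ltac:(lra)) as [z0 [Hmvt Hz0]].
  replace (a + L - a) with L in Hmvt by ring.
  pose proof (proj1 (Rabs_lt_between _ _) (HM a ltac:(lra))).
  pose proof (proj1 (Rabs_lt_between _ _) (HM (a + L) ltac:(lra))).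
  pose proof (proj1 (Rabs_lt_between _ _) (HM z0 ltac:(lra))).
  exists z0. repeat split; [lra | lra |].
  assert (u1 z0 * L > -1) by lra.
  assert (u1 z0 * 2 > - b) by (rewrite <- HL; nra).
  nra.
Qed.

Lemma wave_positive (w : R) : 0 < u w.
Proof.
  destruct (pulled_decay_rate _ _ Hdelta Hc Hspeed) as [b [Hb Hroot]].
  destruct (wave_left_slope_positive b w Hb) as [z0 [Hz0 [Hu0 Hs0]]].
  pose proof Hwave as [Du _].
  apply (exp_weight_positive u (fun t => (u1 t + b * u t) * exp (b * t)) b z0 w);
    [| | lra | exact Hu0].
  - intro z. eapply derivable_pt_lim_eq.
    + apply derivable_pt_lim_mult; [apply Du | apply derivable_pt_lim_exp_scaled].
    + simpl. ring.
  - intros z Hz.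
    assert (0 < u1 z + b * u z).
    { apply (exp_weight_positive (fun t => u1 t + b * u t)
               (fun t => u t * u t / delta * exp ((c / delta - b) * t)) (c / delta - b) z0 z);
        [intro; apply wave_weighted_slope_deriv, Hroot | | lra | exact Hs0].
      intros; apply Rmult_le_pos; [| apply Rlt_le, exp_pos].
      apply Rdiv_le_0_compat; [apply Rle_0_sqr | lra]. }
    apply Rmult_le_pos; [lra | apply Rlt_le, exp_pos].
Qed.

Lemma linear_energy_deriv (lam : R) (p q : R -> R) (z : R) :
  linear_sol delta c u lam p q ->
  let a0 := c / (2 * delta) in
  derivable_pt_lim (fun t => p t * (q t + a0 * p t) * exp (2 * a0 * t)) z
    (((q z + a0 * p z) * (q z + a0 * p z)
      + ((lam - 1 + 2 * u z) / delta + a0 * a0) * (p z * p z)) * exp (2 * a0 * z)).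
Proof.
  intros Hlin a0. destruct (Hlin z) as [Dp Dq].
  eapply derivable_pt_lim_eq.
  - apply (derivable_pt_lim_mult (fun t => p t * (q t + a0 * p t))).
    + apply (derivable_pt_lim_mult p (fun t => q t + a0 * p t)); [exact Dp |].
      apply (derivable_pt_lim_plus q (mult_real_fct a0 p));
        [exact Dq | apply derivable_pt_lim_scal, Dp].
    + apply derivable_pt_lim_exp_scaled.
  - unfold a0. simpl. field. lra.
Qed.

Lemma energy_coefficient_nonneg (lam z : R) :
  0 <= lam -> 0 <= (lam - 1 + 2 * u z) / delta + c / (2 * delta) * (c / (2 * delta)).
Proof.
  intros Hlam. pose proof (wave_positive z).
  replace ((lam - 1 + 2 * u z) / delta + c / (2 * delta) * (c / (2 * delta)))
    with ((4 * delta * lam + 8 * delta * u z + (c * c - 4 * delta)) / (4 * delta * delta))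
    by (field; lra).
  apply Rdiv_le_0_compat; nra.
Qed.

Lemma ell_above_threshold (lam : R) (p q : R -> R) :
  0 <= lam -> ell_sol delta c u lam p q ->
  forall z, p z <> 0 /\ 0 < q z / p z + c / (2 * delta).
Proof.
  intros Hlam [Hlin Hlim] z.
  set (a0 := c / (2 * delta)).
  set (S := sqrt (c ^ 2 + 4 * delta * (lam + 1))).
  assert (0 < S) by (apply sqrt_lt_R0; nra).
  assert (Hmu : mu_u_minus delta c lam + a0 = S / (2 * delta))
    by (unfold mu_u_minus, a0; fold S; field; lra).
  assert (Hgap : 0 < S / (2 * delta)) by (apply Rdiv_lt_0_compat; lra).
  destruct (Hlim _ Hgap) as [M HM].
  destruct (Rlt_le_dec z M) as [Hz | Hz].
  { destruct (HM z Hz) as [Hp Hq]. apply Rabs_lt_between in Hq. split; [exact Hp | lra]. }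
  destruct (HM (M - 1) ltac:(lra)) as [Hp0 Hq0]. apply Rabs_lt_between in Hq0.
  assert (Hpp0 : 0 < p (M - 1) * p (M - 1))
    by (apply Rsqr_pos_lt; exact Hp0).
  assert (Henergy : 0 < p z * (q z + a0 * p z)).
  { apply (exp_weight_positive (fun t => p t * (q t + a0 * p t))
      (fun t => ((q t + a0 * p t) * (q t + a0 * p t)
                 + ((lam - 1 + 2 * u t) / delta + a0 * a0) * (p t * p t)) * exp (2 * a0 * t))
      (2 * a0) (M - 1) z);
      [intro; apply linear_energy_deriv, Hlin | | lra |].
    - intros t _. apply Rmult_le_pos; [| apply Rlt_le, exp_pos].
      apply Rplus_le_le_0_compat; [apply Rle_0_sqr |].
      apply Rmult_le_pos; [apply energy_coefficient_nonneg, Hlam | apply Rle_0_sqr].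
    - replace (p (M - 1) * (q (M - 1) + a0 * p (M - 1)))
        with (p (M - 1) * p (M - 1) * (q (M - 1) / p (M - 1) + a0)) by (field; exact Hp0).
      apply Rmult_lt_0_compat; [exact Hpp0 | lra]. }
  assert (Hpz : p z <> 0) by (intro E; rewrite E in Henergy; lra).
  split; [exact Hpz |].
  replace (q z / p z + a0) with (p z * (q z + a0 * p z) / (p z * p z))
    by (unfold a0; field; split; [lra | exact Hpz]).
  apply Rdiv_lt_0_compat; [exact Henergy | apply Rsqr_pos_lt, Hpz].
Qed.

(* mu^s_+(lam) never exceeds -c/(2 delta). *)
Lemma mu_s_plus_shift (lam : R) :
  mu_s_plus delta c lam + c / (2 * delta)
  = - (sqrt (c ^ 2 + 4 * delta * (lam - 1)) / (2 * delta)).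
Proof. unfold mu_s_plus. field. lra. Qed.

Lemma ell_avoids_mu_s_plus (lam : R) (p q : R -> R) :
  0 <= lam -> ell_sol delta c u lam p q ->
  forall z, ~ rp1_value_eq p q z (mu_s_plus delta c lam).
Proof.
  intros Hlam Hell z [_ Hval].
  destruct (ell_above_threshold lam p q Hlam Hell z) as [_ Habove].
  rewrite Hval, mu_s_plus_shift in Habove.
  assert (0 <= sqrt (c ^ 2 + 4 * delta * (lam - 1)) / (2 * delta))
    by (apply Rdiv_le_0_compat; [apply sqrt_pos | lra]).
  lra.
Qed.

(* No lam > 0 is an eigenvalue: at +oo, ell would have to approach
   mu^s_+(lam) < -c/(2 delta), below the bound of ell_above_threshold. *)
Lemma no_positive_eigenvalue (lam : R) : 0 < lam -> ~ is_eigenvalue delta c u lam.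
Proof.
  intros Hlam [_ [p [q [Hell Hlim]]]].
  set (S := sqrt (c ^ 2 + 4 * delta * (lam - 1))).
  assert (0 < S) by (apply sqrt_lt_R0; simpl; nra).
  assert (Hgap : 0 < S / (2 * delta)) by (apply Rdiv_lt_0_compat; lra).
  destruct (Hlim _ Hgap) as [M HM].
  destruct (HM (M + 1) ltac:(lra)) as [_ Hq]. apply Rabs_lt_between in Hq.
  destruct (ell_above_threshold lam p q (Rlt_le _ _ Hlam) Hell (M + 1)) as [_ Habove].
  pose proof (mu_s_plus_shift lam) as Hshift. fold S in Hshift. lra.
Qed.

End Wave.

Lemma holds_exactly_never (P : R -> Prop) (n : nat) :
  (forall x, ~ P x) -> holds_exactly P n -> n = 0%nat.
Proof.
  intros HP [[| x l] [_ [Hin Hlen]]]; [now simpl in Hlen |].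
  exfalso. apply (HP x), Hin. now left.
Qed.

Lemma holds_exactly_zero (P : R -> Prop) :
  (forall x, ~ P x) -> holds_exactly P 0.
Proof.
  intros HP. exists nil. repeat split; [constructor | intros [] | intros Hx; now apply HP in Hx].
Qed.

Theorem mainTheorem5
  (delta c : R) (u u1 u2 : R -> R) (lam1 lam2 : R) (N1 N2 : nat)
  (p1 q1 p2 q2 : R -> R) :
  0 < delta -> 0 < c -> 2 * sqrt delta <= c ->
  traveling_wave delta c u u1 u2 ->
  0 <= lam1 -> lam1 < lam2 ->
  ~ is_eigenvalue delta c u lam1 -> ~ is_eigenvalue delta c u lam2 ->
  ell_sol delta c u lam1 p1 q1 -> ell_sol delta c u lam2 p2 q2 ->
  holds_exactly (fun z => rp1_value_eq p1 q1 z (mu_s_plus delta c lam1)) N1 ->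
  holds_exactly (fun z => rp1_value_eq p2 q2 z (mu_s_plus delta c lam2)) N2 ->
  holds_exactly (fun lam => lam1 < lam < lam2 /\ is_eigenvalue delta c u lam)
                (Z.abs_nat (Z.of_nat N1 - Z.of_nat N2)).
Proof.
  intros Hd Hc Hsc Htw Hl1 H12 _ _ He1 He2 HN1 HN2.
  pose proof (pulled_speed_sq _ _ Hd Hc Hsc) as Hspeed.
  rewrite (holds_exactly_never _ _
             (ell_avoids_mu_s_plus _ _ _ _ _ Hd Hc Hspeed Htw lam1 _ _ Hl1 He1) HN1).
  rewrite (holds_exactly_never _ _
             (ell_avoids_mu_s_plus _ _ _ _ _ Hd Hc Hspeed Htw lam2 _ _ ltac:(lra) He2) HN2).
  apply holds_exactly_zero. intros lam [Hlam Heig].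
  exact (no_positive_eigenvalue _ _ _ _ _ Hd Hc Hspeed Htw lam ltac:(lra) Heig).
Qed.
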